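(* Let $S$ be a right LCM monoid, and let $F_1,F_2$ be accurate foundation sets for $S$. Then for every unital $*$-homomorphism $\pi$ from $C^*(S)$ into a unital $C^*$-algebra, the following are equivalent: (1) $\sum_{f\in F_1}\pi(e_{fS})=1$ and $\sum_{f\in F_2}\pi(e_{fS})=1$; (2) $\sum_{f\in F_1\cdot F_2}\pi(e_{fS})=1$, where $F_1\cdot F_2=\{st\mid s\in F_1,t\in F_2\}$. (That is, the boundary relation $\sum_{f\in F}e_{fS}=1$ for both $F_1$ and $F_2$ is equivalent to the boundary relation for $F_1\cdot F_2$.)
   Context: A right LCM monoid is a countable discrete monoid $S$ that is left cancellative and such that for all $s,t\in S$ the intersection $sS\cap tS$ is either empty or equal to $rS$ for some $r\in S$. A finite subset $F\subset S$ is a foundation set if for every $t\in S$ there is $s\in F$ with $sS\cap tS\neq\emptyset$; it is accurate if $fS\cap f'S=\emptyset$ for distinct $f,f'\in F$. The full semigroup $C^*$-algebra $C^*(S)$ (in the sense of Li) is the universal $C^*$-algebra generated by isometries $\{v_s: s\in S\}$ and projections $\{e_X : X\in\mathcal{J}(S)\}$, where $\mathcal{J}(S)=\{\emptyset\}\cup\{sS: s\in S\}$, subject to $v_{st}=v_sv_t$, $v_se_Xv_s^*=e_{sX}$, $e_S=1$, $e_\emptyset=0$, $e_Xe_Y=e_{X\cap Y}$; in particular $e_{sS}=v_sv_s^*$. *)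

From HB Require Import structures.
From mathcomp Require Import all_boot all_order all_algebra.
From mathcomp Require Import finmap.
From mathcomp Require Import complex.
From mathcomp Require Import boolp classical_sets reals.
Set Implicit Arguments. Unset Strict Implicit. Unset Printing Implicit Defensive.
Import Order.TTheory GRing.Theory Num.Theory.

Local Open Scope classical_set_scope.
Local Open Scope ring_scope.

Section Monoid.
Variables (S : choiceType) (mul : S -> S -> S) (one : S).

Definition pideal (s : S) : set S := range (mul s).

Definition lmul_set (s : S) (X : set S) : set S := mul s @` X.

Definition JS (X : set S) : Prop := X = set0 \/ exists s, X = pideal s.

Record is_rightLCM : Prop := {
  mulA : forall s t u, mul s (mul t u) = mul (mul s t) u;
  mul1s : forall s, mul one s = s;
  muls1 : forall s, mul s one = s;
  lcancel : forall s t u, mul s t = mul s u -> t = u;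
  lcm : forall s t, pideal s `&` pideal t = set0 \/
                    exists r, pideal s `&` pideal t = pideal r }.

Definition foundation (F : {fset S}) : Prop :=
  forall t : S, exists2 s, s \in F & pideal s `&` pideal t <> set0.

Definition accurate (F : {fset S}) : Prop :=
  forall f f', f \in F -> f' \in F -> f <> f' -> pideal f `&` pideal f' = set0.
End Monoid.

Record is_Cstar (R : realType) (A : algType R[i]) (star : A -> A) (nrm : A -> R)
  : Prop := {
  star_add : forall a b, star (a + b) = star a + star b;
  star_scale : forall (c : R[i]) a, star (c *: a) = (c^*)%C *: star a;
  star_mul : forall a b, star (a * b) = star b * star a;
  star_invol : forall a, star (star a) = a;
  nrm_ge0 : forall a, 0 <= nrm a;
  nrm_eq0 : forall a, nrm a = 0 -> a = 0;
  nrm_add : forall a b, nrm (a + b) <= nrm a + nrm b;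
  nrm_scale : forall (c : R[i]) a, nrm (c *: a) = Normc.normc c * nrm a;
  nrm_mul : forall a b, nrm (a * b) <= nrm a * nrm b;
  nrm_cstar : forall a, nrm (star a * a) = nrm a ^+ 2;
  nrm_complete : forall u : nat -> A,
    (forall e : R, 0 < e -> exists N, forall m n, (N <= m)%N -> (N <= n)%N ->
        nrm (u m - u n) < e) ->
    exists l : A, forall e : R, 0 < e -> exists N, forall n, (N <= n)%N ->
        nrm (u n - l) < e }.

(* By the universal property of Li's full semigroup C*-algebra C*(S), a unital
   *-homomorphism pi : C*(S) -> A is the same thing as a family
   V s = pi(v_s) (isometries), E X = pi(e_X) (projections, X in J(S))
   in A satisfying the defining relations. *)
Record is_Cstar_rep (S : choiceType) (mul : S -> S -> S) (R : realType)
  (A : algType R[i]) (star : A -> A) (V : S -> A) (E : set S -> A) : Prop := {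
  rep_isom : forall s, star (V s) * V s = 1;
  rep_proj : forall X, JS mul X -> star (E X) = E X /\ E X * E X = E X;
  rep_mul : forall s t, V (mul s t) = V s * V t;
  rep_conj : forall s X, JS mul X -> V s * E X * star (V s) = E (lmul_set mul s X);
  rep_top : E setT = 1;
  rep_bot : E set0 = 0;
  rep_cap : forall X Y, JS mul X -> JS mul Y -> E X * E Y = E (X `&` Y) }.

Definition fset_prod (S : choiceType) (mul : S -> S -> S) (F1 F2 : {fset S})
  : {fset S} := [fset mul s t | s in F1, t in F2]%fset.

From HB Require Import structures.
From mathcomp Require Import all_boot all_order all_algebra.
From mathcomp Require Import finmap.
From mathcomp Require Import complex.
From mathcomp Require Import boolp classical_sets reals.
Set Implicit Arguments. Unset Strict Implicit. Unset Printing Implicit Defensive.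
Import Order.TTheory GRing.Theory Num.Theory.
Local Open Scope ring_scope.

(* Write P_F for the boundary sum over F.  Since e_{stS} = v_s e_{tS} v_s^*,
   P_{F1.F2} = sum_{s in F1} v_s P_{F2} v_s^*, and accuracy of F1 makes the
   isometries v_s (s in F1) have orthogonal ranges, so that
   v_s^* P_{F1.F2} v_s = P_{F2} for every s in F1.  Hence P_{F1.F2} = 1 forces
   P_{F2} = 1 (F1 is nonempty, being a foundation set), and then
   P_{F1.F2} = P_{F1}. *)

Section OrthogonalIsometries.
Variables (A : pzRingType) (I : choiceType) (V W : I -> A) (F : {fset I}).
Hypothesis WV1 : forall s, s \in F -> W s * V s = 1.
Hypothesis WV0 : forall s s', s \in F -> s' \in F -> s != s' -> W s * V s' = 0.

Lemma mul_sum_orth_isometries (X : I -> A) s : s \in F ->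
  W s * \sum_(s' <- F) V s' * X s' = X s.
Proof.
move=> sF; rewrite mulr_sumr (big_fsetD1 s) //= mulrA WV1 // mul1r.
rewrite big1_fset ?addr0 // => s'; rewrite !inE => /andP[s's s'F] _.
by rewrite mulrA WV0 1?eq_sym // mul0r.
Qed.

Lemma compress_conj_sum (P : A) s : s \in F ->
  W s * (\sum_(s' <- F) V s' * P * W s') * V s = P.
Proof.
move=> sF; under eq_bigr do rewrite -mulrA.
by rewrite mul_sum_orth_isometries // -mulrA WV1 ?mulr1.
Qed.

Lemma conj_sum_eq1 (P : A) : F != fset0 ->
  \sum_(s <- F) V s * P * W s = 1 <-> \sum_(s <- F) V s * W s = 1 /\ P = 1.
Proof.
case/fset0Pn=> s0 s0F; split=> [sum1 | [sum1 ->]]; last first.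
  by under eq_bigr do rewrite mulr1.
have P1 : P = 1 by rewrite -(compress_conj_sum P s0F) sum1 mulr1 WV1.
by split=> //; rewrite -[RHS]sum1 P1; under [RHS]eq_bigr do rewrite mulr1.
Qed.

End OrthogonalIsometries.

Section RightLCM.
Variables (S : choiceType) (mul : S -> S -> S) (one : S).
Hypothesis HS : is_rightLCM mul one.

Lemma pideal_one : pideal mul one = setT.
Proof. by apply/seteqP; split=> x // _; exists x => //; exact: (mul1s HS). Qed.

Lemma JS_pideal s : JS mul (pideal mul s).
Proof. by right; exists s. Qed.

Lemma foundation_neq0 (F : {fset S}) : foundation mul F -> F != fset0.
Proof. by move=> fF; apply/fset0Pn; have [s sF _] := fF one; exists s. Qed.

Lemma accurate_mul_inj (F : {fset S}) : accurate mul F ->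
  forall s s' t t', s \in F -> s' \in F -> mul s t = mul s' t' ->
  s = s' /\ t = t'.
Proof.
move=> aF s s' t t' sF s'F e.
have [ss'|ss'] := pselect (s = s').
  by subst s'; split=> //; exact: (lcancel HS e).
have /seteqP[/(_ (mul s t)) + _] := aF _ _ sF s'F ss'.
by case; split; [exists t | exists t'].
Qed.

Lemma big_fset_prod (M : nmodType) (G : S -> M) (F1 F2 : {fset S}) :
  accurate mul F1 ->
  \sum_(f <- fset_prod mul F1 F2) G f = \sum_(s <- F1) \sum_(t <- F2) G (mul s t).
Proof.
move=> aF1; rewrite big_imfset2 //= => -[s t] [s' t'].
rewrite !inE /= => /andP[sF _] /andP[s'F _] /= e.
by have [ss' tt'] := accurate_mul_inj aF1 sF s'F e; subst.
Qed.

Variables (R : realType) (A : algType R[i]) (star : A -> A).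
Variables (V : S -> A) (E : set S -> A).
Hypothesis Hpi : is_Cstar_rep mul star V E.
Hypothesis star_mul : forall a b, star (a * b) = star b * star a.

Lemma E_pideal s : E (pideal mul s) = V s * star (V s).
Proof.
have JT : JS mul setT by rewrite -pideal_one; apply: JS_pideal.
by have := rep_conj Hpi s JT; rewrite (rep_top Hpi) mulr1 => <-.
Qed.

Lemma E_pideal_mul s t :
  E (pideal mul (mul s t)) = V s * E (pideal mul t) * star (V s).
Proof. by rewrite !E_pideal (rep_mul Hpi) star_mul !mulrA. Qed.

Lemma accurate_isometries_orth (F : {fset S}) : accurate mul F ->
  forall s s', s \in F -> s' \in F -> s != s' -> star (V s) * V s' = 0.
Proof.
move=> aF s s' sF s'F /eqP ss'.
have -> : star (V s) * V s' =
    star (V s) * (E (pideal mul s) * E (pideal mul s')) * V s'.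
  by rewrite !E_pideal !mulrA (rep_isom Hpi) mul1r -!mulrA (rep_isom Hpi) mulr1.
rewrite (rep_cap Hpi (JS_pideal s) (JS_pideal s')).
have -> : E (pideal mul s `&` pideal mul s')%classic = 0.
  by rewrite -(rep_bot Hpi); congr E; apply: aF.
by rewrite mulr0 mul0r.
Qed.

Lemma boundary_sum_prod (F1 F2 : {fset S}) : accurate mul F1 ->
  \sum_(f <- fset_prod mul F1 F2) E (pideal mul f) =
  \sum_(s <- F1) V s * (\sum_(t <- F2) E (pideal mul t)) * star (V s).
Proof.
move=> aF1; rewrite big_fset_prod //; apply: eq_bigr => s _.
by rewrite mulr_sumr mulr_suml; apply: eq_bigr => t _; rewrite E_pideal_mul.
Qed.

End RightLCM.

Theorem lemma2p3 (S : countType) (mul : S -> S -> S) (one : S)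
  (HS : is_rightLCM mul one)
  (F1 F2 : {fset S})
  (fF1 : foundation mul F1) (aF1 : accurate mul F1)
  (fF2 : foundation mul F2) (aF2 : accurate mul F2)
  (R : realType) (A : algType R[i]) (star : A -> A) (nrm : A -> R)
  (HA : is_Cstar star nrm)
  (V : S -> A) (E : classical_sets.set S -> A)
  (Hpi : is_Cstar_rep mul star V E) :
  (\sum_(f <- F1) E (pideal mul f) = 1 /\ \sum_(f <- F2) E (pideal mul f) = 1)
  <-> \sum_(f <- fset_prod mul F1 F2) E (pideal mul f) = 1.
Proof.
have isom s (_ : s \in F1) : star (V s) * V s = 1 := rep_isom Hpi s.
have orth := accurate_isometries_orth HS Hpi aF1.
rewrite (boundary_sum_prod HS Hpi (star_mul HA) F2 aF1).
rewrite (conj_sum_eq1 isom orth _ (foundation_neq0 one fF1)).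
by rewrite -(eq_bigr _ (fun s _ => E_pideal HS Hpi s)).
Qed.
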